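(* Let $1\le n\le N$, $k\ge0$ and $L_0>8\mathrm r_0$. If the $n$-particle cubes $\Lambda^{(n)}_{L_k}(\mathbf u)$ and $\Lambda^{(n)}_{L_k}(\mathbf v)$ are both fully interactive and $\|\mathbf u-\mathbf v\|\ge 11nL_k$, then they are completely separable. Moreover, the random operators $\mathbf H^{(n)}_{\Lambda^{(n)}_{L_k}(\mathbf u)}$ and $\mathbf H^{(n)}_{\Lambda^{(n)}_{L_k}(\mathbf v)}$ are independent.
   Context: Points of $\mathbb Z^{nd}$ are $\mathbf x=(x_1,\dots,x_n)$, $x_j\in\mathbb Z^d$, with $\|x_j\|=\max_i|x_j^{(i)}|$, $\|\mathbf x\|=\max_j\|x_j\|$, $\langle x\rangle=\max\{1,\|x\|\}$. Cubes $\Lambda^{(n)}_L(\mathbf u)=\{\mathbf x\in\mathbb Z^{nd}:\|\mathbf x-\mathbf u\|\le L\}$; $L_k=L_0^{4^k}$. Projections: $\Pi_j\mathbf x=x_j$, $\Pi\Lambda=\bigcup_{j=1}^n\Pi_j\Lambda\subset\mathbb Z^d$. The random $n$-particle operator is $\mathbf H^{(n)}_\omega=\frac1g(\mathbf T+\mathbf U)+\mathbf V(\cdot,\omega)$ on $\ell^2(\mathbb Z^{nd})$ with $g\ne0$: $\mathbf T(\mathbf x,\mathbf y)=\langle y_j-x_j\rangle^{-r}$ if there is $j$ with $x_i=y_i$ for all $i\ne j$, else $0$; $\mathbf U(\mathbf x)=\sum_{j_1<j_2}U(x_{j_1},x_{j_2})$ with $U$ bounded symmetric and $U(x,x')=0$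 if $\|x-x'\|\ge\mathrm r_0$ ($\mathrm r_0\ge1$); $\mathbf V(\mathbf x,\omega)=\sum_jV(x_j,\omega)$ with $V(x,\omega)$, $x\in\mathbb Z^d$, i.i.d. real random variables. $\mathbf H^{(n)}_\Lambda$ denotes the restriction of $\mathbf H^{(n)}_\omega$ to $\Lambda$ (the matrix $(\mathbf H^{(n)}_\omega(\mathbf x,\mathbf y))_{\mathbf x,\mathbf y\in\Lambda}$). A cube $\Lambda^{(n)}_L(\mathbf u)$ is fully interactive if $\min_{x\in\mathbb Z^d}\max_{1\le j\le n}\|u_j-x\|\le2n(L+\mathrm r_0)$. Two cubes $\Lambda^{(n)}_L(\mathbf u),\Lambda^{(n)}_L(\mathbf v)$ are completely separable if $\Pi\Lambda^{(n)}_{L+\mathrm r_0}(\mathbf u)\cap\Pi\Lambda^{(n)}_{L+\mathrm r_0}(\mathbf v)=\emptyset$. *)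

From HB Require Import structures.
From mathcomp Require Import all_boot all_order all_algebra.
From mathcomp Require Import all_classical all_reals all_analysis.

Set Implicit Arguments.
Unset Strict Implicit.
Unset Printing Implicit Defensive.

Import Order.TTheory GRing.Theory Num.Theory.
Local Open Scope classical_set_scope.
Local Open Scope ring_scope.

Definition site (d : nat) := {ffun 'I_d -> int}.
Definition config (n d : nat) := {ffun 'I_n -> site d}.

Definition site_sub d (x y : site d) : site d := [ffun i => x i - y i].
Definition config_sub n d (x y : config n d) : config n d :=
  [ffun j => site_sub (x j) (y j)].

Definition site_norm d (x : site d) : nat := (\max_(i < d) `|x i|%N)%N.
Definition config_norm n d (x : config n d) : nat :=
  (\max_(j < n) site_norm (x j))%N.

Definition bracket (R : realType) d (x : site d) : R :=
  Num.max 1 (site_norm x)%:R.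

Definition Lscale (R : realType) (L0 : R) (k : nat) : R := L0 ^+ (4 ^ k).

Definition cube (R : realType) n d (L : R) (u : config n d) : set (config n d) :=
  [set x | ((config_norm (config_sub x u))%:R <= L)%R].

Definition proj_set n d (Lam : set (config n d)) : set (site d) :=
  [set z | exists x j, Lam x /\ x j = z].

Definition fully_interactive (R : realType) n d (r0 L : R) (u : config n d) :=
  exists x : site d,
    (((\max_(j < n) site_norm (site_sub (u j) x))%N)%:R <= 2 * n%:R * (L + r0))%R.

Definition completely_separable (R : realType) n d (r0 L : R)
    (u v : config n d) :=
  proj_set (cube (L + r0) u) `&` proj_set (cube (L + r0) v) = set0.

Definition Tkin (R : realType) n d (r : R) (x y : config n d) : R :=
  match [pick j | [forall i, (i != j) ==> (x i == y i)]] with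
  | Some j => (bracket R (site_sub (y j) (x j))) `^ (- r)
  | None => 0
  end.

Definition Uint (R : realType) n d (U : site d -> site d -> R) (x : config n d) : R :=
  \sum_(j1 < n) \sum_(j2 < n | (j1 < j2)%N) U (x j1) (x j2).

(* Matrix elements of H^{(n)}_omega = (1/g)(T + U) + V(., omega) *)
Definition Hop (R : realType) n d (Omega : Type) (g r : R)
    (U : site d -> site d -> R) (V : site d -> Omega -> R)
    (x y : config n d) (w : Omega) : R :=
  g^-1 * (Tkin r x y + (if x == y then Uint U x else 0))
  + (if x == y then \sum_(j < n) V (x j) w else 0).

Definition sigma_rv (R : realType) (Omega : Type) (X : Omega -> R) : set (set Omega) :=
  preimage_set_system setT X measurable.

(* sigma-algebra generated by the random matrix (H(x,y,.))_{x,y in Lam},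
   i.e. by the random operator H restricted to Lam *)
Definition sigma_restr (R : realType) n d (Omega : Type)
    (H : config n d -> config n d -> Omega -> R) (Lam : set (config n d))
    : set (set Omega) :=
  <<s \bigcup_(p in [set p : config n d * config n d | Lam p.1 /\ Lam p.2])
        sigma_rv (H p.1 p.2) >>.

Definition indep_sigma (R : realType) (dm : measure_display)
    (Omega : measurableType dm) (P : probability Omega R)
    (F G : set (set Omega)) :=
  forall A B, F A -> G B -> P (A `&` B) = (P A * P B)%E.

Definition iid_field (R : realType) (dm : measure_display) d
    (Omega : measurableType dm) (P : probability Omega R)
    (V : site d -> Omega -> R) :=
  [/\ forall x, measurable_fun setT (V x),
      forall x y (A : set R), measurable A ->
        P (V x @^-1` A) = P (V y @^-1` A) &
      forall (s : seq (site d)) (E : site d -> set Omega), uniq s ->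
        (forall x, x \in s -> sigma_rv (V x) (E x)) ->
        P (\bigcap_(x in [set` s]) E x) = (\prod_(x <- s) P (E x))%E].

From HB Require Import structures.
From mathcomp Require Import all_boot all_order all_algebra.
From mathcomp Require Import all_classical all_reals all_analysis.
From mathcomp Require Import ring lra zify.
Import Order.TTheory GRing.Theory Num.Theory.
Local Open Scope classical_set_scope.
Local Open Scope ring_scope.

Set Implicit Arguments.
Unset Strict Implicit.
Unset Printing Implicit Defensive.

(* Full interactivity puts all particles of a cube centre within 2n(L + r0) of a
   common site.  A site within L + r0 of a particle of each of the two cubes
   would therefore bring the centres within (8n + 2)(L + r0) < 11nL of each
   other (within 2(L + r0) when n = 1), so the projections are disjoint.  The
   entries of H restricted to a cube are measurable functions of the potential
   on the projection of that cube, and by the pi-lambda theorem the potentials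
   on two disjoint sets of sites generate independent sigma-algebras. *)

Section SiteDistance.
Variable d : nat.
Implicit Types x y z : site d.

Definition site_dist x y : nat := site_norm (site_sub x y).

Lemma site_distC x y : site_dist x y = site_dist y x.
Proof. by apply: eq_bigr => i _; rewrite !ffunE distnC. Qed.

Lemma site_dist_triangle x y z : (site_dist x z <= site_dist x y + site_dist y z)%N.
Proof.
apply/bigmax_leqP => i _; rewrite ffunE.
apply: leq_trans (leqD_dist _ (y i) _) _.
by apply: leq_add; apply: leq_trans (leq_bigmax i); rewrite ffunE.
Qed.

Lemma site_dist_triangleR (R : numDomainType) x y z :
  (site_dist x z)%:R <= (site_dist x y)%:R + (site_dist y z)%:R :> R.
Proof. by rewrite -natrD ler_nat site_dist_triangle. Qed.

End SiteDistance.

Section ConfigNorm.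
Variables n d : nat.
Implicit Types x y : config n d.

Lemma site_dist_le_config_norm x y j :
  (site_dist (x j) (y j) <= config_norm (config_sub x y))%N.
Proof. by apply: leq_trans (leq_bigmax j); rewrite ffunE. Qed.

Lemma config_norm_attained x y : (0 < n)%N ->
  exists j, config_norm (config_sub x y) = site_dist (x j) (y j).
Proof.
move=> n_gt0; rewrite /config_norm.
have [|j ->] := @bigop.eq_bigmax _ (fun j => site_norm (config_sub x y j)).
  by rewrite card_ord.
by exists j; rewrite ffunE.
Qed.

End ConfigNorm.

Section Cubes.
Variables (R : realType) (n d : nat).
Implicit Types (L : R) (u v : config n d) (z : site d).

Lemma cubeS L L' u : L <= L' -> cube L u `<=` cube L' u.
Proof. by move=> LL' x /le_trans; apply. Qed.

Lemma proj_setS (A B : set (config n d)) : A `<=` B -> proj_set A `<=` proj_set B.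
Proof. by move=> AB z [x [j [Ax <-]]]; exists x, j; split => //; apply: AB. Qed.

Lemma proj_cube_near L u z :
  proj_set (cube L u) z -> exists j, (site_dist z (u j))%:R <= L.
Proof.
move=> [x [j [xL <-]]]; exists j; apply: le_trans xL.
by rewrite ler_nat site_dist_le_config_norm.
Qed.

Lemma fully_interactive_site_dist r0 L u i j : fully_interactive r0 L u ->
  (site_dist (u i) (u j))%:R <= 4 * n%:R * (L + r0).
Proof.
move=> [a a_center].
have near_a l : (site_dist (u l) a)%:R <= 2 * n%:R * (L + r0).
  by apply: le_trans a_center; rewrite ler_nat (leq_bigmax l).
apply: le_trans (site_dist_triangleR _ (u i) a (u j)) _.
by rewrite (site_distC a); have := near_a i; have := near_a j; lra.
Qed.

Lemma ord_eq_le1 (i j : 'I_n) : (n <= 1)%N -> i = j.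
Proof. by move=> n_le1; apply: ord_inj; have := ltn_ord i; have := ltn_ord j; lia. Qed.

Lemma common_proj_config_norm_lt r0 L u v z :
  8 * r0 < L -> fully_interactive r0 L u -> fully_interactive r0 L v ->
  proj_set (cube (L + r0) u) z -> proj_set (cube (L + r0) v) z ->
  (config_norm (config_sub u v))%:R < 11 * n%:R * L.
Proof.
move=> r0L fu fv /proj_cube_near[i zi] /proj_cube_near[l zl].
have Lr0_ge0 : 0 <= L + r0 by apply: le_trans zi.
have uv_il : (site_dist (u i) (v l))%:R <= 2 * (L + r0).
  by apply: le_trans (site_dist_triangleR _ _ z _) _; rewrite (site_distC _ z); lra.
have [j ->] := config_norm_attained u v (leq_ltn_trans (leq0n i) (ltn_ord i)).
have [n_le1 | n_gt1] := leqP n 1.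
  (* The bound (8n + 2)(L + r0) below is too weak for n = 1, but then i = j = l. *)
  have n1 : n%:R = 1 :> R by rewrite (_ : n = 1%N) //; have := ltn_ord i; lia.
  rewrite (ord_eq_le1 l i n_le1) in uv_il; rewrite (ord_eq_le1 j i n_le1) n1; lra.
have uu := fully_interactive_site_dist j i fu.
have vv := fully_interactive_site_dist l j fv.
have ujvj := site_dist_triangleR R (u j) (v l) (v j).
have ujvl := site_dist_triangleR R (u j) (u i) (v l).
have n2 : 2 <= n%:R :> R by rewrite (ler_nat R 2).
have : 0 <= (8 * n%:R + 2) * (L - 8 * r0) by apply: mulr_ge0; lra.
have : 0 <= (n%:R - 2) * L by apply: mulr_ge0; lra.
nra.
Qed.

Lemma fully_interactive_completely_separable r0 L u v :
  8 * r0 < L -> fully_interactive r0 L u -> fully_interactive r0 L v ->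
  11 * n%:R * L <= (config_norm (config_sub u v))%:R ->
  completely_separable r0 L u v.
Proof.
move=> r0L fu fv far; apply/seteqP; split => // z [zu zv].
by have := common_proj_config_norm_lt r0L fu fv zu zv; rewrite ltNge far.
Qed.

Lemma completely_separable_proj_disjoint r0 L u v : 0 <= r0 ->
  completely_separable r0 L u v -> proj_set (cube L u) `&` proj_set (cube L v) = set0.
Proof.
move=> r0_ge0 sep; apply/seteqP; split => // z [zu zv]; rewrite -sep.
have grow (w : config n d) : cube L w `<=` cube (L + r0) w by apply: cubeS; lra.
by split; [apply: proj_setS zu | apply: proj_setS zv].
Qed.

End Cubes.

Section Independence.
Variables (R : realType) (dm : measure_display) (Omega : measurableType dm).
Variable P : probability Omega R.
Implicit Types F G : set (set Omega).

Lemma indep_sigmaC F G : indep_sigma P F G -> indep_sigma P G F.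
Proof. by move=> FG A B GA FB; rewrite setIC muleC; apply: FG. Qed.

Lemma indep_sigmaS F G F' G' :
  F' `<=` F -> G' `<=` G -> indep_sigma P F G -> indep_sigma P F' G'.
Proof. by move=> F'F G'G FG A B F'A G'B; apply: FG; [apply: F'F | apply: G'G]. Qed.

Lemma dynkin_indep_with (C : set Omega) : measurable C ->
  dynkin [set A | measurable A /\ P (A `&` C) = (P A * P C)%E].
Proof.
move=> mC; have [c [c_ge0 PC]] : exists c : R, 0 <= c /\ P C = c%:E.
  by exists (fine (P C)); rewrite fineK ?fin_num_measure // fine_ge0.
split.
- by split => //; rewrite setTI probability_setT mul1e.
- move=> A [mA PAC]; split; first exact: measurableC.
  have [a PA] : exists a : R, P A = a%:E by exists (fine (P A)); rewrite fineK ?fin_num_measure.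
  have PCA : P (C `&` A) = (a * c)%:E by rewrite setIC PAC PA PC.
  have -> : ~` A `&` C = C `\` A by rewrite setDE setIC.
  rewrite measureD //; last by rewrite (le_lt_trans (probability_le1 _ mC)) // ltry.
  rewrite probability_setC // PA PC.
  transitivity (c%:E - (a * c)%:E)%E; first by congr (_ - _)%E; [exact: PC | exact: PCA].
  by rewrite -EFinM -!EFinB; congr _%:E; ring.
- move=> F tF FA; have mF k : measurable (F k) by case: (FA k).
  split; first exact: bigcupT_measurable.
  rewrite setI_bigcupl measure_semi_bigcup //; first last.
  + by apply: bigcupT_measurable => k; apply: measurableI.
  + exact: trivIset_setIr.
  + by move=> k; apply: measurableI.
  transitivity (\sum_(0 <= k <oo) (c%:E * P (F k)))%E.
    by apply: eq_eseriesr => k _; rewrite muleC -PC; case: (FA k).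
  by rewrite nneseriesZl // PC muleC measure_semi_bigcup //; exact: bigcupT_measurable.
Qed.

Lemma indep_sigma_generatedl F G : setI_closed F -> F `<=` measurable ->
  G `<=` measurable -> indep_sigma P F G -> indep_sigma P <<s F >> G.
Proof.
move=> FI mF mG FG A C sFA GC.
suff [] : [set A | measurable A /\ P (A `&` C) = (P A * P C)%E] A by [].
apply: (lambda_system_subset FI) sFA => //.
- exact/dynkin_lambda_system/dynkin_indep_with/mG.
- by move=> B FB; split; [apply: mF | apply: FG].
Qed.

Lemma indep_sigma_generated F G : setI_closed F -> setI_closed G ->
  F `<=` measurable -> G `<=` measurable ->
  indep_sigma P F G -> indep_sigma P <<s F >> <<s G >>.
Proof.
move=> FI GI mF mG FG; apply/indep_sigmaC/indep_sigma_generatedl => //.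
  by apply: smallest_sub => //; exact: sigma_algebra_measurable.
exact/indep_sigmaC/indep_sigma_generatedl.
Qed.

End Independence.

Section Cylinders.
Variables (R : realType) (dm : measure_display) (Omega : measurableType dm).
Variables (I : eqType) (V : I -> Omega -> R).

Definition cylinder (S : set I) : set (set Omega) :=
  [set A | exists (s : seq I) (B : I -> set R),
     [/\ uniq s, (forall x, x \in s -> S x), (forall x, measurable (B x)) &
         A = \bigcap_(x in [set` s]) V x @^-1` B x]].

Lemma bigcap_preimageI (s s' t : seq I) (B B' : I -> set R) : t =i s ++ s' ->
  (\bigcap_(x in [set` s]) V x @^-1` B x) `&` (\bigcap_(x in [set` s']) V x @^-1` B' x) =
  \bigcap_(x in [set` t])
    V x @^-1` ((if x \in s then B x else setT) `&` (if x \in s' then B' x else setT)).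
Proof.
move=> t_ss'; apply/seteqP; split => w /=.
  by move=> [ws ws'] x _; split; case: ifPn => // ?; [apply: ws | apply: ws'].
move=> wt; split => x /= xs; have /= := wt x.
  by rewrite t_ss' mem_cat xs => /(_ isT) [].
by rewrite t_ss' mem_cat xs orbT => /(_ isT) [].
Qed.

Lemma cylinder_setI_closed S : setI_closed (cylinder S).
Proof.
move=> _ _ [s [B [us sS mB ->]]] [s' [B' [us' s'S mB' ->]]].
exists (undup (s ++ s')), (fun x =>
  (if x \in s then B x else setT) `&` (if x \in s' then B' x else setT)).
split; first exact: undup_uniq.
- by move=> x; rewrite mem_undup mem_cat => /orP[]; [apply: sS | apply: s'S].
- by move=> x; apply: measurableI; case: ifP.
- by apply: bigcap_preimageI => x; rewrite mem_undup.
Qed.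

Lemma cylinder_measurable S :
  (forall x, measurable_fun setT (V x)) -> cylinder S `<=` measurable.
Proof.
move=> mV _ [s [B [_ _ mB ->]]].
apply: fin_bigcap_measurable; first exact: finite_seq.
by move=> x _; rewrite -[X in measurable X]setTI; apply: mV.
Qed.

Variable P : probability Omega R.
Hypothesis V_mutually_indep : forall (s : seq I) (E : I -> set Omega), uniq s ->
  (forall x, x \in s -> sigma_rv (V x) (E x)) ->
  P (\bigcap_(x in [set` s]) E x) = (\prod_(x <- s) P (E x))%E.

Lemma probability_cylinder (s : seq I) (B : I -> set R) :
  uniq s -> (forall x, measurable (B x)) ->
  P (\bigcap_(x in [set` s]) V x @^-1` B x) = (\prod_(x <- s) P (V x @^-1` B x))%E.
Proof. by move=> us mB; apply: V_mutually_indep => // x _; exists (B x); rewrite ?setTI. Qed.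

Lemma cylinder_indep S1 S2 :
  S1 `&` S2 = set0 -> indep_sigma P (cylinder S1) (cylinder S2).
Proof.
move=> S12 _ _ [s [B [us sS1 mB ->]]] [s' [B' [us' s'S2 mB' ->]]].
have s_s' x : x \in s -> x \in s' = false.
  move=> xs; apply/negP => xs'; suff : (S1 `&` S2) x by rewrite S12.
  by split; [apply: sS1 | apply: s'S2].
have s'_s x : x \in s' -> x \in s = false by move=> xs'; apply/negP => /s_s'; rewrite xs'.
rewrite (@bigcap_preimageI s s' (s ++ s')) // probability_cylinder; first last.
- by move=> x; apply: measurableI; case: ifP.
- by rewrite cat_uniq us us' andbT; apply/hasPn => x /s'_s ->.
rewrite !probability_cylinder // big_cat; congr (_ * _)%E; apply: eq_big_seq => x xs.
  by rewrite xs s_s' // setIT.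
by rewrite xs s'_s // setTI.
Qed.

Lemma generated_cylinder_indep S1 S2 : (forall x, measurable_fun setT (V x)) ->
  S1 `&` S2 = set0 -> indep_sigma P <<s cylinder S1 >> <<s cylinder S2 >>.
Proof.
move=> mV S12; apply: indep_sigma_generated (cylinder_indep S12);
  by [apply: cylinder_setI_closed | apply: cylinder_measurable].
Qed.

End Cylinders.

Section Hamiltonian.
Variables (R : realType) (dm : measure_display) (Omega : measurableType dm).
Variables (n d : nat) (g r : R) (U : site d -> site d -> R) (V : site d -> Omega -> R).

Lemma measurable_potential_cylinder (S : set (site d)) z : S z ->
  measurable_fun (setT : set (g_sigma_algebraType (cylinder V S))) (V z).
Proof.
move=> Sz _ B mB; apply: sub_sigma_algebra; exists [:: z], (fun=> B).
split=> // [x|]; first by case/predU1P => [->|].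
rewrite setTI; apply/seteqP; split => w /=.
  by move=> Bw x; case/predU1P => [->|].
by apply; exact: mem_head.
Qed.

Lemma measurable_Hop_cylinder (Lam : set (config n d)) x y : Lam x ->
  measurable_fun (setT : set (g_sigma_algebraType (cylinder V (proj_set Lam))))
    (Hop g r U V x y).
Proof.
move=> Lx; apply: measurable_realfun.measurable_funD; first exact: measurable_cst.
case: eqP => _; last exact: measurable_cst.
by apply: measurable_sum => j; apply: measurable_potential_cylinder; exists x, j.
Qed.

Lemma sigma_restr_Hop_sub (Lam : set (config n d)) :
  sigma_restr (Hop g r U V) Lam `<=` <<s cylinder V (proj_set Lam) >>.
Proof.
apply: smallest_sub; first exact: smallest_sigma_algebra.
by move=> _ [[x y] /= [Lx _] [B mB <-]]; apply: measurable_Hop_cylinder.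
Qed.

End Hamiltonian.

Lemma Lscale_ge (R : realType) (L0 : R) k : 1 <= L0 -> L0 <= Lscale L0 k.
Proof. by move=> L0_ge1; apply: ler_eXnr; rewrite ?expn_gt0. Qed.

Theorem lemma3p7 (R : realType) (dm : measure_display)
    (Omega : measurableType dm) (P : probability Omega R)
    (d N n k : nat) (g r r0 L0 : R)
    (U : site d -> site d -> R) (V : site d -> Omega -> R)
    (u v : config n d) :
  g != 0 ->
  1 <= r0 ->
  (exists M : R, forall x x', `|U x x'| <= M) ->
  (forall x x', U x x' = U x' x) ->
  (forall x x', r0 <= (site_norm (site_sub x x'))%:R -> U x x' = 0) ->
  iid_field P V ->
  (1 <= n)%N -> (n <= N)%N ->
  8 * r0 < L0 ->
  fully_interactive r0 (Lscale L0 k) u ->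
  fully_interactive r0 (Lscale L0 k) v ->
  11 * n%:R * Lscale L0 k <= (config_norm (config_sub u v))%:R ->
  completely_separable r0 (Lscale L0 k) u v /\
  indep_sigma P
    (sigma_restr (Hop g r U V) (cube (Lscale L0 k) u))
    (sigma_restr (Hop g r U V) (cube (Lscale L0 k) v)).
Proof.
(* Neither g nor U matters: they enter H only through deterministic terms. *)
move=> _ r0_ge1 _ _ _ [mV _ V_indep] _ _ r0L0 fu fv far.
have r0L : 8 * r0 < Lscale L0 k by apply: lt_le_trans (Lscale_ge _ _) => //; lra.
have sep := fully_interactive_completely_separable r0L fu fv far.
split=> //.
apply: indep_sigmaS; [exact: sigma_restr_Hop_sub | exact: sigma_restr_Hop_sub |].
apply: (generated_cylinder_indep V_indep mV).
by apply: completely_separable_proj_disjoint sep; lra.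
Qed.
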